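(* Let $E$ be a locally convex space over $K$ and $\phi:E\to\mathbb R$ a convex function attaining its minimum value at $0$. Then: (1) $\phi(\lambda x)=\phi(x)$ for all $x\in E$ and $\lambda\in K$ with $|\lambda|=1$; (2) $\phi(x+y)\le\max(\phi(x),\phi(y))$ for all $x,y\in E$.
   Context: $K$ is a field complete with respect to a non-trivial non-archimedean absolute value, $B_K=\{x\in K:|x|\le1\}$. A function $\phi:E\to\mathbb R$ is convex if for all $n$, $x_1,\dots,x_n\in E$ and $\lambda_1,\dots,\lambda_n\in B_K$ with $\sum\lambda_i=1$ one has $\phi(\sum\lambda_ix_i)\le\max_i|\lambda_i|\phi(x_i)$. *)

From mathcomp Require Import all_boot all_order all_algebra.
From mathcomp Require Import reals.
Set Implicit Arguments. Unset Strict Implicit. Unset Printing Implicit Defensive.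
Import Order.TTheory GRing.Theory Num.Theory.
Local Open Scope ring_scope.

Definition nonarch_abs (R : realType) (K : fieldType) (v : K -> R) : Prop :=
  [/\ forall x, 0 <= v x,
      forall x, v x = 0 <-> x = 0,
      forall x y, v (x * y) = v x * v y,
      forall x y, v (x + y) <= Num.max (v x) (v y)
    & exists x, v x != 0 /\ v x != 1].

Definition abs_complete (R : realType) (K : fieldType) (v : K -> R) : Prop :=
  forall u : nat -> K,
    (forall e : R, 0 < e -> exists N, forall m n, (N <= m)%N -> (N <= n)%N ->
        v (u m - u n) < e) ->
    exists l : K, forall e : R, 0 < e -> exists N, forall n, (N <= n)%N ->
        v (u n - l) < e.

Definition nonarch_seminorm (R : realType) (K : fieldType) (v : K -> R)
    (E : lmodType K) (p : E -> R) : Prop :=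
  (forall (a : K) (x : E), p (a *: x) = v a * p x) /\
  (forall x y : E, p (x + y) <= Num.max (p x) (p y)).

(* A locally convex structure on E: a family of non-archimedean seminorms
   (the topology of E is the one generated by this family). *)
Definition locally_convex (R : realType) (K : fieldType) (v : K -> R)
    (E : lmodType K) (I : Type) (p : I -> E -> R) : Prop :=
  forall i, nonarch_seminorm v (p i).

(* Convexity of phi : E -> R in the sense of the paper:
   phi (sum_i l_i x_i) <= max_i |l_i| phi (x_i) whenever |l_i| <= 1 and
   sum_i l_i = 1.  (Families indexed by 'I_n.+1; n = 0 terms is vacuous
   since sum l_i = 1 forces at least one term.) *)
Definition na_convex (R : realType) (K : fieldType) (v : K -> R)
    (E : lmodType K) (phi : E -> R) : Prop :=
  forall (n : nat) (x : 'I_n.+1 -> E) (l : 'I_n.+1 -> K),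
    (forall i, v (l i) <= 1) ->
    \sum_(i < n.+1) l i = 1 ->
    phi (\sum_(i < n.+1) l i *: x i)
      <= \big[Num.max/ v (l ord0) * phi (x ord0)]_(i < n.+1) (v (l i) * phi (x i)).

(* Only three-term convex combinations are needed.  Writing
   [a x = a x + 1 0 + (-a) 0] gives [phi (a x) <= max (phi x, phi 0) = phi x]
   whenever [|a| = 1], and applying this to [a^-1] gives equality; writing
   [x + y = 1 x + 1 y + (-1) 0] gives
   [phi (x + y) <= max (phi x, phi y, phi 0)], where [phi 0] may be dropped
   since it is the minimum. *)
From mathcomp Require Import all_boot all_order all_algebra.
From mathcomp Require Import reals.
Import Order.TTheory GRing.Theory Num.Theory.
Local Open Scope ring_scope.

Section MultiplicativeAbsoluteValue.

Variables (R : numFieldType) (K : fieldType) (v : K -> R).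
Hypothesis v_ge0 : forall x, 0 <= v x.
Hypothesis v_eq0 : forall x, v x = 0 <-> x = 0.
Hypothesis vM : forall x y, v (x * y) = v x * v y.

Lemma abs_neq0 (x : K) : x != 0 -> v x != 0.
Proof. by move=> x_neq0; apply/eqP => /v_eq0/eqP; apply/negP. Qed.

Lemma abs1 : v 1 = 1.
Proof.
suff : v 1 * v 1 = v 1 * 1 by apply: mulfI; apply: abs_neq0; apply: oner_neq0.
by rewrite -vM !mulr1.
Qed.

Lemma absN1 : v (-1) = 1.
Proof.
have : v (-1) ^+ 2 == 1 by rewrite expr2 -vM mulrNN mulr1 abs1.
rewrite sqrf_eq1 => /orP[/eqP // | /eqP vN1].
by have := v_ge0 (-1); rewrite vN1 ler0N1.
Qed.

Lemma absN (x : K) : v (- x) = v x.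
Proof. by rewrite -mulN1r vM absN1 mul1r. Qed.

Lemma absV (x : K) : x != 0 -> v x^-1 = (v x)^-1.
Proof.
move=> x_neq0.
suff : v x * v x^-1 = v x * (v x)^-1 by apply: mulfI; apply: abs_neq0.
by rewrite -vM !divff ?abs_neq0 ?abs1.
Qed.

End MultiplicativeAbsoluteValue.

Section NonArchimedeanConvexity.

Variables (R : realType) (K : fieldType) (v : K -> R).
Variables (E : lmodType K) (phi : E -> R).
Hypothesis phi_convex : na_convex v phi.

Lemma na_convex3 (a b c : K) (x y z : E) :
  v a <= 1 -> v b <= 1 -> v c <= 1 -> a + b + c = 1 ->
  phi (a *: x + b *: y + c *: z) <=
  Num.max (Num.max (v a * phi x) (v b * phi y)) (v c * phi z).
Proof.
move=> va vb vc abc1.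
pose X (i : 'I_3) := nth 0 [:: x; y; z] i.
pose L (i : 'I_3) := nth 0 [:: a; b; c] i.
have vL : forall i, v (L i) <= 1 by case=> [[|[|[|]]]].
have sumL : \sum_(i < 3) L i = 1 by rewrite !big_ord_recr big_ord0 /= add0r.
have := phi_convex 2%N X L vL sumL.
rewrite !big_ord_recr !big_ord_recl !big_ord0 /= add0r => /le_trans; apply.
by rewrite !ge_max !le_max !lexx !orbT.
Qed.

Hypothesis v_ge0 : forall x, 0 <= v x.
Hypothesis v_eq0 : forall x, v x = 0 <-> x = 0.
Hypothesis vM : forall x y, v (x * y) = v x * v y.
Hypothesis phi0_min : forall x, phi 0 <= phi x.

Lemma na_convex_scale_le (a : K) (x : E) : v a = 1 -> phi (a *: x) <= phi x.
Proof.
move=> va.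
have := na_convex3 a 1 (- a) x 0 0.
rewrite absN // va abs1 // lexx addrC addKr => /(_ isT isT isT erefl).
rewrite !scaler0 !addr0 !mul1r => /le_trans; apply.
by rewrite !ge_max lexx phi0_min.
Qed.

Lemma na_convex_scale_eq (a : K) (x : E) : v a = 1 -> phi (a *: x) = phi x.
Proof.
move=> va; apply/eqP; rewrite eq_le na_convex_scale_le //=.
have a_neq0 : a != 0.
  by apply: contra_eq_neq va => /v_eq0 ->; rewrite eq_sym oner_eq0.
by rewrite -{1}(scalerK a_neq0 x) na_convex_scale_le // absV // va invr1.
Qed.

Lemma na_convex_add_le_max (x y : E) : phi (x + y) <= Num.max (phi x) (phi y).
Proof.
have := na_convex3 1 1 (- 1) x y 0.
rewrite absN // abs1 // lexx addrK => /(_ isT isT isT erefl).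
rewrite !scale1r scaler0 addr0 !mul1r => /le_trans; apply.
by rewrite ge_max lexx le_max phi0_min.
Qed.

End NonArchimedeanConvexity.

Theorem mainTheorem6 (R : realType) (K : fieldType) (v : K -> R)
    (hv : nonarch_abs v) (hK : abs_complete v)
    (E : lmodType K) (I : Type) (p : I -> E -> R) (hE : locally_convex v p)
    (phi : E -> R) (hphi : na_convex v phi)
    (hmin : forall x : E, phi 0 <= phi x) :
  (forall (x : E) (a : K), v a = 1 -> phi (a *: x) = phi x) /\
  (forall x y : E, phi (x + y) <= Num.max (phi x) (phi y)).
Proof.
case: hv => v_ge0 v_eq0 vM _ _.
split=> [x a|x y].
- exact: na_convex_scale_eq hphi v_ge0 v_eq0 vM hmin a x.
- exact: na_convex_add_le_max hphi v_ge0 v_eq0 vM hmin x y.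
Qed.
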